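(* Assume $q\ge n$ (so $\psi^-:M_{q,n}\to\mathrm{Sym}^n$ is surjective), and let $y$, $x$, $x'$, $Y$, $Z$, $Z_y$, $Z_{x'}$, $S_y$ be as in the context. Then: (i) $Y$ is a single $K_x\times K'_{\mathbb C}$-orbit, generated by $y$; hence $Y\cong(K_x\times K'_{\mathbb C})/S_y$. (ii) There is a group homomorphism $\beta:K_x\to K'_{x'}$ such that $S_y=\{(k,\beta(k)):k\in K_x\}$. (iii) There is a bijection $T:Z_y\to Z_{x'}$ commuting with the action of $K^t_{\mathbb C}=\mathrm O(t,\mathbb C)$ and satisfying $T((k,\beta(k))\cdot z)=\beta(k)\cdot T(z)$ for all $z\in Z_y$ and $k\in K_x$.
   Context: Let $p,q,t,n$ satisfy $p+q+t$ even, $\min(p,q+t)\ge2n$, $\max(p,q+t)>2n$. $K_{\mathbb C}=\mathrm O(p,\mathbb C)\times\mathrm O(q,\mathbb C)$, $K^t_{\mathbb C}=\mathrm O(t,\mathbb C)$, $K'_{\mathbb C}=\mathrm{GL}(n,\mathbb C)$. $W_H=M_{p,n}\oplus M_{q,n}\oplus M_{t,n}\ni(w^+;w_1,w_2)$, $W=M_{p,n}\oplus M_{q,n}$, ${\rm pr}(w^+;w_1,w_2)=(w^+;w_1)$. Actions: $(o_p,o_q,o_t,g)\cdot(w^+;w_1,w_2)=(o_pw^+g^{-1};o_qw_1g^T,o_tw_2g^T)$. Maps: $\phi(w^+;w_1)=w^+w_1^T\in M_{p,q}$, $\psi^+(w^+)=(w^+)^Tw^+$, $\psi^-(w_1)=w_1^Tw_1$,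 $\psi_2(w_2)=w_2^Tw_2$. $K_{\mathbb C}$ acts on $M_{p,q}$ by $(o_p,o_q)\cdot m=o_pmo_q^T$ and $K'_{\mathbb C}$ on $\mathrm{Sym}^n$ by $g\cdot s=gsg^T$. Null cone $\overline{\mathcal N}=\{\psi^+(w^+)=0,\ \psi^-(w_1)+\psi_2(w_2)=0\}$. For $m\ge 2n$ let $E_{m,n}$ be the $m\times n$ matrix with block rows $I_n$, $0_{(m-2n)\times n}$, $iI_n$. Put $z_0=(E_{p,n};E_{q+t,n})\in\overline{\mathcal N}$ (with $E_{q+t,n}$ split into its first $q$ and last $t$ rows), $y=(y^+;y^-)={\rm pr}(z_0)$, $x=\phi(y)$, $x'=-\psi^-(y^-)$. $K_x$, $K'_{x'}$ are the stabilizers of $x$ in $K_{\mathbb C}$ and of $x'$ in $K'_{\mathbb C}$; $S_y$ is the stabilizer of $y$ in $K_{\mathbb C}\times K'_{\mathbb C}$. $Y=\phi^{-1}(x)\cap{\rm pr}(\overline{\mathcal N})$, $Z=\{z\in\overline{\mathcal N}:\phi({\rm pr}(z))=x\}$, $Z_y=\{z\in Z:{\rm pr}(z)=y\}$, $Z_{x'}=\psi_2^{-1}(x')\subseteq M_{t,n}$. *)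

(* The complex field C is modelled by an arbitrary
   numClosedFieldType (algebraically closed, char 0, with 'i). *)
From HB Require Import structures.
From mathcomp Require Import all_boot all_order all_algebra.
Set Implicit Arguments. Unset Strict Implicit. Unset Printing Implicit Defensive.
Import Order.TTheory GRing.Theory Num.Theory.
Local Open Scope ring_scope.

Section Defs.
Variable C : numClosedFieldType.

Definition orthm (m : nat) (o : 'M[C]_m) : bool := o^T *m o == 1%:M.
Definition glm (m : nat) (g : 'M[C]_m) : bool := g \in unitmx.

(* E_{m,n}: block rows I_n, 0_{(m-2n) x n}, i I_n *)
Definition Emat (m n : nat) : 'M[C]_(m, n) :=
  \matrix_(i < m, j < n)
    if (i < n)%N then ((i : nat) == j)%:R
    else if (m - n <= i)%N then 'i * (((i - (m - n))%N == j))%:R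
    else 0.

Definition phi (p q n : nat) (wp : 'M[C]_(p, n)) (w1 : 'M[C]_(q, n)) : 'M[C]_(p, q) :=
  wp *m w1^T.
(* psi^+, psi^-, psi_2 are all w |-> w^T w *)
Definition psi (m n : nat) (w : 'M[C]_(m, n)) : 'M[C]_n := w^T *m w.

Definition W (p q n : nat) := ('M[C]_(p, n) * 'M[C]_(q, n))%type.
Definition WH (p q t n : nat) := ('M[C]_(p, n) * 'M[C]_(q, n) * 'M[C]_(t, n))%type.

Definition pr (p q t n : nat) (z : WH p q t n) : W p q n := (z.1.1, z.1.2).

Definition actW (p q n : nat) (op : 'M[C]_p) (oq : 'M[C]_q) (g : 'M[C]_n)
  (w : W p q n) : W p q n :=
  (op *m w.1 *m invmx g, oq *m w.2 *m g^T).
Definition actWH (p q t n : nat) (op : 'M[C]_p) (oq : 'M[C]_q) (ot : 'M[C]_t)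
  (g : 'M[C]_n) (z : WH p q t n) : WH p q t n :=
  (op *m z.1.1 *m invmx g, oq *m z.1.2 *m g^T, ot *m z.2 *m g^T).

Definition nullcone (p q t n : nat) (z : WH p q t n) : Prop :=
  psi z.1.1 = 0 /\ psi z.1.2 + psi z.2 = 0.

(* z0 = (E_{p,n}; E_{q+t,n}) split into first q and last t rows *)
Definition z0 (p q t n : nat) : WH p q t n :=
  (Emat p n, usubmx (Emat (q + t) n), dsubmx (Emat (q + t) n)).
Definition ypt (p q t n : nat) : W p q n := pr (z0 p q t n).
Definition xpt (p q t n : nat) : 'M[C]_(p, q) :=
  phi (ypt p q t n).1 (ypt p q t n).2.
Definition x'pt (p q t n : nat) : 'M[C]_n := - psi (ypt p q t n).2.

Definition in_Kx (p q t n : nat) (op : 'M[C]_p) (oq : 'M[C]_q) : bool :=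
  [&& orthm op, orthm oq & op *m xpt p q t n *m oq^T == xpt p q t n].
Definition in_K'x' (p q t n : nat) (g : 'M[C]_n) : bool :=
  glm g && (g *m x'pt p q t n *m g^T == x'pt p q t n).
Definition in_Sy (p q t n : nat) (op : 'M[C]_p) (oq : 'M[C]_q) (g : 'M[C]_n) : Prop :=
  [/\ orthm op, orthm oq, glm g & actW op oq g (ypt p q t n) = ypt p q t n].

Definition inY (p q t n : nat) (w : W p q n) : Prop :=
  phi w.1 w.2 = xpt p q t n /\
  exists z : WH p q t n, nullcone z /\ pr z = w.
Definition inZ (p q t n : nat) (z : WH p q t n) : Prop :=
  nullcone z /\ phi (pr z).1 (pr z).2 = xpt p q t n.
Definition inZy (p q t n : nat) (z : WH p q t n) : Prop :=
  inZ z /\ pr z = ypt p q t n.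
Definition inZx' (p q t n : nat) (w2 : 'M[C]_(t, n)) : Prop :=
  psi w2 = x'pt p q t n.

End Defs.

From HB Require Import structures.
From mathcomp Require Import all_boot all_order all_algebra.
From mathcomp Require Import zify.
Set Implicit Arguments. Unset Strict Implicit. Unset Printing Implicit Defensive.
Import Order.TTheory GRing.Theory Num.Theory.
Local Open Scope ring_scope.

(* Lemma 5.3.  Write E = E_{p,n} and (Y ; D) = E_{q+t,n}, so that y = (E, Y),
   x = E Y^T and x' = -Y^T Y.  The argument rests on one observation: E and Y
   have left inverses (projection onto the first n coordinates; 2n <= p and
   n <= q), hence every factorization x = A B^T is a GL_n-translate
   (E g^-1, Y g^T) of (E, Y) (factor_orbit).  Applied to (op E, oq Y) for
   (op, oq) in K_x this yields beta(op) = L op E in K'_C fixing y; conversely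
   every element of S_y has this form, and beta is multiplicative because
   op E = E beta(op).  The rest is elementary: psi transforms covariantly, so
   the null cone is stable (converse inclusion in (i)); the columns of E_{m,n}
   are isotropic, so z0 lies in the null cone; and Z_y is the fibre
   {(E, Y, w2)}, so T z = z.2 is the equivariant bijection onto Z_{x'}. *)

Section Equivariance.
Variable C : numClosedFieldType.

Lemma psi_orth m n (o : 'M[C]_m) (A : 'M[C]_(m, n)) : orthm o -> psi (o *m A) = psi A.
Proof. by move=> /eqP ho; rewrite /psi trmx_mul -mulmxA (mulmxA o^T) ho mul1mx. Qed.

Lemma psi_mulmxr m n (A : 'M[C]_(m, n)) (h : 'M[C]_n) : psi (A *m h) = h^T *m psi A *m h.
Proof. by rewrite /psi trmx_mul !mulmxA. Qed.

Lemma psi_col_mx m1 m2 n (A : 'M[C]_(m1, n)) (B : 'M[C]_(m2, n)) :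
  psi (col_mx A B) = psi A + psi B.
Proof. by rewrite /psi tr_col_mx mul_row_col. Qed.

Lemma orthm1 m : orthm (1%:M : 'M[C]_m).
Proof. by rewrite /orthm trmx1 mulmx1. Qed.

Lemma phi_actW p q n op oq (g : 'M[C]_n) (w : W C p q n) : g \in unitmx ->
  phi (actW op oq g w).1 (actW op oq g w).2 = op *m phi w.1 w.2 *m oq^T.
Proof.
by move=> ug; rewrite /phi /= !trmx_mul trmxK !mulmxA -(mulmxA _ (invmx g)) mulVmx // mulmx1.
Qed.

Lemma nullcone_actWH p q t n op oq ot (g : 'M[C]_n) (z : WH C p q t n) :
  orthm op -> orthm oq -> orthm ot -> nullcone z -> nullcone (actWH op oq ot g z).
Proof.
move=> hp hq ht [h1 h2]; rewrite /nullcone /= !psi_mulmxr !psi_orth // h1.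
by split; [rewrite mulmx0 mul0mx | rewrite -mulmxDl -mulmxDr h2 mulmx0 mul0mx].
Qed.

Lemma psi_stab m n (o : 'M[C]_m) (B : 'M[C]_(m, n)) g :
  orthm o -> o *m B *m g^T = B -> g *m psi B *m g^T = psi B.
Proof. by move=> ho hB; rewrite -{2}hB psi_mulmxr psi_orth // trmxK. Qed.

End Equivariance.

Section Factorization.
Variables (C : numClosedFieldType) (p q n : nat).
Variables (E : 'M[C]_(p, n)) (Y : 'M[C]_(q, n)) (L : 'M[C]_(n, p)) (S : 'M[C]_(n, q)).
Hypotheses (LE : L *m E = 1%:M) (SY : S *m Y = 1%:M).

Lemma factor_orbit (A : 'M[C]_(p, n)) (B : 'M[C]_(q, n)) :
  A *m B^T = E *m Y^T -> exists2 g, g \in unitmx & A = E *m invmx g /\ B = Y *m g^T.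
Proof.
move=> hAB; set g := B^T *m S^T; set M := L *m A.
have YS : Y^T *m S^T = 1%:M by rewrite -trmx_mul SY trmx1.
have Ag : A *m g = E by rewrite /g mulmxA hAB -mulmxA YS mulmx1.
have Mg : M *m g = 1%:M by rewrite /M -mulmxA Ag LE.
have gM : g *m M = 1%:M := mulmx1C Mg.
have ug : g \in unitmx by case: (mulmx1_unit gM).
have invg : invmx g = M by rewrite -[invmx g]mulmx1 -gM mulmxA mulVmx // mul1mx.
exists g => //; split; first by rewrite invg -Ag -mulmxA gM mulmx1.
have MBt : M *m B^T = Y^T by rewrite /M -mulmxA hAB mulmxA LE mul1mx.
by apply: trmx_inj; rewrite trmx_mul trmxK -MBt mulmxA gM mul1mx.
Qed.

(* The homomorphism beta : K_x -> K'_{x'} reads off op on the column space of E. *)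
Definition beta (op : 'M[C]_p) : 'M[C]_n := L *m op *m E.

Lemma stab_factor (op : 'M[C]_p) (oq : 'M[C]_q) :
  op *m (E *m Y^T) *m oq^T = E *m Y^T ->
  [/\ beta op \in unitmx, op *m E = E *m beta op & oq *m Y *m (beta op)^T = Y].
Proof.
move=> hx; have [g ug [opE oqY]] : exists2 g, g \in unitmx &
    op *m E = E *m invmx g /\ oq *m Y = Y *m g^T.
  by apply: factor_orbit; rewrite trmx_mul -hx !mulmxA.
have -> : beta op = invmx g by rewrite /beta -mulmxA opE mulmxA LE mul1mx.
split; rewrite ?unitmx_inv //.
by rewrite oqY -mulmxA -trmx_mul mulVmx // trmx1 mulmx1.
Qed.

Lemma stab_iff (op : 'M[C]_p) (oq : 'M[C]_q) (g : 'M[C]_n) :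
  (g \in unitmx /\ (op *m E *m invmx g, oq *m Y *m g^T) = (E, Y)) <->
  (op *m (E *m Y^T) *m oq^T = E *m Y^T /\ g = beta op).
Proof.
split=> [[ug [opEg oqYg]] | [hx ->]].
  have opE : op *m E = E *m g by rewrite -[in RHS]opEg -mulmxA mulVmx // mulmx1.
  split; last by rewrite /beta -mulmxA opE mulmxA LE mul1mx.
  by rewrite mulmxA opE -[in RHS]oqYg !trmx_mul trmxK !mulmxA.
have [ub opE oqY] := stab_factor hx.
by split=> //; rewrite opE -mulmxA mulmxV // mulmx1 oqY.
Qed.

Lemma beta_mul (op1 op2 : 'M[C]_p) (oq2 : 'M[C]_q) :
  op2 *m (E *m Y^T) *m oq2^T = E *m Y^T -> beta (op1 *m op2) = beta op1 *m beta op2.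
Proof.
by case/stab_factor=> _ opE _; rewrite [LHS]/beta -!mulmxA opE !mulmxA.
Qed.

End Factorization.

Section StandardIsotropic.
Variable C : numClosedFieldType.

Lemma sum_indicator m (a : nat) (F : nat -> C) :
  \sum_(k < m) (((k : nat) == a)%:R * F k) = if (a < m)%N then F a else 0.
Proof.
elim: m => [|m IH]; first by rewrite big_ord0 ltn0.
rewrite big_ord_recr /= IH ltnS [(a <= m)%N]leq_eqVlt.
case: (eqVneq m a) => [->|ne]; first by rewrite ltnn mul1r add0r.
by rewrite mul0r addr0.
Qed.

Definition Emat_entry (m n k j : nat) : C :=
  (k == j)%:R + 'i * ((k == j + (m - n))%N)%:R.

Lemma EmatE m n (i : 'I_m) (j : 'I_n) :
  (2 * n <= m)%N -> Emat C m n i j = Emat_entry m n i j.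
Proof.
move=> hm; have hi := ltn_ord i; have hj := ltn_ord j.
rewrite mxE /Emat_entry; case: ifP => hin.
  have -> : ((i : nat) == j + (m - n))%N = false by apply/eqP; lia.
  by rewrite mulr0 addr0.
have -> : ((i : nat) == j) = false by apply/eqP; lia.
case: ifP => hlo.
  have -> : ((i - (m - n))%N == j) = ((i : nat) == j + (m - n))%N.
    by apply/eqP/eqP; lia.
  by rewrite add0r.
have -> : ((i : nat) == j + (m - n))%N = false by apply/eqP; lia.
by rewrite mulr0 addr0.
Qed.

(* The columns of E_{m,n} span a totally isotropic subspace, since 1 + i^2 = 0. *)
Lemma psi_Emat m n : (2 * n <= m)%N -> psi (Emat C m n) = 0.
Proof.
move=> hm; apply/matrixP => i j; rewrite !mxE.
have hi := ltn_ord i; have hj := ltn_ord j.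
under eq_bigr => k _ do rewrite mxE !EmatE // {1}/Emat_entry mulrDl -mulrA.
rewrite big_split /= -mulr_sumr.
rewrite !(sum_indicator _ _ (Emat_entry m n ^~ j)) /Emat_entry.
have -> : (i < m)%N by lia.
have -> : (i + (m - n) < m)%N by lia.
have -> : ((i : nat) == j + (m - n))%N = false by apply/eqP; lia.
have -> : ((i + (m - n))%N == j) = false by apply/eqP; lia.
have -> : ((i + (m - n))%N == j + (m - n))%N = ((i : nat) == j) by apply/eqP/eqP; lia.
by rewrite mulr0 addr0 add0r mulrA -expr2 sqrCi mulN1r addrN.
Qed.

Definition first_rows m n : 'M[C]_(n, m) := \matrix_(i < n, k < m) ((k : nat) == i)%:R.

(* The first n rows of E_{m',n} (or of any of its row blocks containing them)
   form the identity matrix. *)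
Lemma first_rows_Emat m m' n (A : 'M[C]_(m, n)) :
  (2 * n <= m')%N -> (n <= m)%N ->
  (forall k (j : 'I_n), A k j = Emat_entry m' n k j) -> first_rows m n *m A = 1%:M.
Proof.
move=> hm' hm hA; apply/matrixP => i j; rewrite !mxE.
under eq_bigr => k _ do rewrite mxE hA.
have hi := ltn_ord i; rewrite (sum_indicator _ _ (Emat_entry m' n ^~ j)) /Emat_entry.
have -> : (i < m)%N by lia.
have -> : ((i : nat) == j + (m' - n))%N = false by apply/eqP; lia.
by rewrite mulr0 addr0.
Qed.

End StandardIsotropic.

Section BasePoint.
Variables (C : numClosedFieldType) (p q t n : nat).
Hypotheses (hp : (2 * n <= p)%N) (hqt : (2 * n <= q + t)%N) (hq : (n <= q)%N).

Local Notation E := (Emat C p n).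
Local Notation Y := (usubmx (Emat C (q + t) n) : 'M[C]_(q, n)).
Local Notation L := (first_rows C p n).

Lemma left_inverse_E : L *m E = 1%:M.
Proof.
have hnp : (n <= p)%N by apply: leq_trans hp; rewrite leq_pmull.
by apply: (first_rows_Emat hp hnp) => k j; rewrite EmatE.
Qed.

Lemma left_inverse_Y : first_rows C q n *m Y = 1%:M.
Proof. by apply: (first_rows_Emat hqt) => // k j; rewrite mxE EmatE. Qed.

Lemma in_Kx_components (op : 'M[C]_p) (oq : 'M[C]_q) : @in_Kx C p q t n op oq ->
  [/\ orthm op, orthm oq & op *m (E *m Y^T) *m oq^T = E *m Y^T].
Proof. by case/and3P => ? ? /eqP. Qed.

Lemma nullcone_z0 : nullcone (z0 C p q t n).
Proof. by split; rewrite /= ?psi_Emat // -psi_col_mx vsubmxK psi_Emat. Qed.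

Lemma inY_orbit (w : W C p q n) :
  @inY C p q t n w <-> exists (op : 'M[C]_p) (oq : 'M[C]_q) (g : 'M[C]_n),
    [/\ @in_Kx C p q t n op oq, @glm C n g & w = @actW C p q n op oq g (ypt C p q t n)].
Proof.
case: w => [A B]; split.
  case=> /= hAB _; have [g ug [-> ->]] := factor_orbit left_inverse_E left_inverse_Y hAB.
  exists 1%:M, 1%:M, g; split=> //; last by rewrite /actW /= !mul1mx.
  by apply/and3P; rewrite !orthm1 mul1mx trmx1 mulmx1.
case=> op [oq [g [/in_Kx_components [hop hoq hx] ug ->]]]; split; first by rewrite phi_actW.
exists (actWH op oq 1%:M g (z0 C p q t n)); split=> //.
by apply: nullcone_actWH; rewrite ?orthm1 //; apply: nullcone_z0.
Qed.

Lemma beta_in_K'x' (op : 'M[C]_p) (oq : 'M[C]_q) :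
  @in_Kx C p q t n op oq -> @in_K'x' C p q t n (beta E L op).
Proof.
case/in_Kx_components=> _ hoq /(stab_factor left_inverse_E left_inverse_Y) [ub _ hY].
by apply/andP; split=> //; rewrite /x'pt mulmxN mulNmx (psi_stab hoq hY).
Qed.

Lemma in_Sy_graph (op : 'M[C]_p) (oq : 'M[C]_q) (g : 'M[C]_n) :
  @in_Sy C p q t n op oq g <-> @in_Kx C p q t n op oq /\ g = beta E L op.
Proof.
have stab := stab_iff left_inverse_E left_inverse_Y op oq.
split=> [[hop hoq ug /(conj ug) /stab [hx ->]] | [/in_Kx_components [hop hoq hx] ->]].
  by split=> //; apply/and3P; split=> //; apply/eqP.
by have [] := (stab _).2 (conj hx erefl).
Qed.

Lemma inZy_iff (z : WH C p q t n) :
  @inZy C p q t n z <-> pr z = ypt C p q t n /\ @inZx' C p q t n z.2.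
Proof.
case: z => [[a b] c]; rewrite /inZy /inZ /nullcone /inZx' /x'pt /ypt /pr /=.
split=> [[[[_ hn] _] [-> hb]] | [[-> ->] hc]].
  by subst b; split=> //; apply/eqP; rewrite -addr_eq0 addrC hn.
by rewrite psi_Emat // hc addrN.
Qed.

End BasePoint.

Theorem lemma5p3 (C : numClosedFieldType) (p q t n : nat) :
  ~~ odd (p + q + t) ->
  (2 * n <= minn p (q + t))%N ->
  (2 * n < maxn p (q + t))%N ->
  (n <= q)%N ->
  (* (i) Y is the K_x x K'_C-orbit of y *)
  (forall w : W C p q n,
     @inY C p q t n w <->
     exists (op : 'M[C]_p) (oq : 'M[C]_q) (g : 'M[C]_n),
       [/\ @in_Kx C p q t n op oq, @glm C n g & w = @actW C p q n op oq g (ypt C p q t n)]) /\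
  (* (ii) S_y is the graph of a homomorphism beta : K_x -> K'_{x'} *)
  (exists beta : 'M[C]_p -> 'M[C]_q -> 'M[C]_n,
     (forall op oq, @in_Kx C p q t n op oq -> @in_K'x' C p q t n (beta op oq)) /\
     (forall op1 oq1 op2 oq2, @in_Kx C p q t n op1 oq1 -> @in_Kx C p q t n op2 oq2 ->
        beta (op1 *m op2) (oq1 *m oq2) = beta op1 oq1 *m beta op2 oq2) /\
     (forall op oq g, @in_Sy C p q t n op oq g <-> (@in_Kx C p q t n op oq /\ g = beta op oq)) /\
  (* (iii) an equivariant bijection T : Z_y -> Z_{x'} *)
     (exists T : WH C p q t n -> 'M[C]_(t, n),
        (forall z, @inZy C p q t n z -> @inZx' C p q t n (T z)) /\
        (forall z1 z2, @inZy C p q t n z1 -> @inZy C p q t n z2 -> T z1 = T z2 -> z1 = z2) /\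
        (forall w2, @inZx' C p q t n w2 -> exists z, @inZy C p q t n z /\ T z = w2) /\
        (forall (ot : 'M[C]_t) z, @orthm C t ot -> @inZy C p q t n z ->
           T (@actWH C p q t n 1%:M 1%:M ot 1%:M z) = ot *m T z) /\
        (forall op oq z, @in_Kx C p q t n op oq -> @inZy C p q t n z ->
           T (@actWH C p q t n op oq 1%:M (beta op oq) z) = T z *m (beta op oq)^T))).
Proof.
move=> _ hmin _ hq.
have hp : (2 * n <= p)%N by lia.
have hqt : (2 * n <= q + t)%N by lia.
have fibre := @inZy_iff C p q t n hp.
split; first exact: inY_orbit hp hqt hq.
exists (fun op _ => beta (Emat C p n) (first_rows C p n) op); split; [|split; [|split]].
- exact: beta_in_K'x' hp hqt hq.
- move=> op1 oq1 op2 oq2 _ /in_Kx_components [_ _ hx2].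
  by rewrite (beta_mul (left_inverse_E C hp) (left_inverse_Y C hqt hq) op1 hx2).
- exact: in_Sy_graph hp hqt hq.
exists snd; split; [|split; [|split; [|split]]].
- by move=> z /fibre [].
- move=> [[a1 b1] c1] [[a2 b2] c2] /fibre [h1 _] /fibre [h2 _] /= ->.
  by move: h1 h2; rewrite /pr /= => -> ->.
- by move=> w2 hw; exists (Emat C p n, usubmx (Emat C (q + t) n), w2); split=> //; apply/fibre.
- by move=> ot z _ _; rewrite /actWH /= trmx1 mulmx1.
- by move=> op oq z _ _; rewrite /actWH /= mul1mx.
Qed.
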